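(* Suppose the $n$ units are partitioned into $L$ blocks (matched subclasses), block $l$ containing $n_{l(0)}$ control units ($A=0$) and $n_{l(1)}$ treated units ($A=1$), $n_l=n_{l(0)}+n_{l(1)}$. Let $\sigma_0^2>0$, $\sigma^2=1+\sigma_0^2$, $\rho=1/\sigma^2$, and let $\boldsymbol\Sigma$ be block diagonal (units ordered by block) with $l$-th block $\boldsymbol\Sigma_l=\sigma^2[(1-\rho)\boldsymbol I_{n_l}+\rho\boldsymbol J_{n_l}]=\boldsymbol J_{n_l}+\sigma_0^2\boldsymbol I_{n_l}$, where $\boldsymbol J_m$ is the $m\times m$ all-ones matrix. Let $(\hat\mu,\hat\tau)'=\big[X'\boldsymbol\Sigma^{-1}X\big]^{-1}X'\boldsymbol\Sigma^{-1}\boldsymbol Y_n$ with $X=(\boldsymbol 1_n,\boldsymbol A_n)$. Let $\bar Y_{l(a)}$ be the mean outcome of group $a$ in block $l$, $q_l=(1-\rho+\rho n_l)^{-1}$, and (all sums over $l=1,\dots,L$) $$C_1=\textstyle\sum q_ln_l\cdot\sum q_ln_{l(1)}n_{l(0)}(\bar Y_{l(1)}-\bar Y_{l(0)}),\quad C_2=\sum q_ln_{l(0)}\cdot\sum q_ln_{l(1)}\bar Y_{l(1)}-\sum q_ln_{l(1)}\cdot\sum q_ln_{l(0)}\bar Y_{l(0)},$$ $$D_1=\textstyle\sum q_ln_l\cdot\sum q_ln_{l(1)}n_{l(0)},\qquad D_2=\sum q_ln_{l(1)}\cdot\sum q_ln_{l(0)}.$$ Assume $D_1>0$ and $D_2>0$.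 Then $$\hat\tau=\lambda\hat\tau_1+(1-\lambda)\hat\tau_0,\qquad \hat\tau_1=\frac{C_1}{D_1},\quad \hat\tau_0=\frac{C_2}{D_2},\quad \lambda=\frac{\rho D_1}{\rho D_1+(1-\rho)D_2}.$$
   Context: This is the generalized least squares (posterior mean for fixed covariance, flat prior) estimate of the treatment effect in the nonparametric GP model $\boldsymbol Y_n\sim MVN(\mu\boldsymbol 1_n+\tau\boldsymbol A_n,\boldsymbol\Sigma)$, $\boldsymbol\Sigma=\boldsymbol K+\sigma_0^2\boldsymbol I_n$, where $\boldsymbol K=(k_{ij})$ encodes a known matching structure with $k_{ij}=1$ if units $i,j$ are in the same block (matched) and $k_{ij}=0$ otherwise. $\boldsymbol A_n=(A_1,\dots,A_n)'$ is the treatment indicator vector. *)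

From HB Require Import structures.
From mathcomp Require Import all_boot all_order all_algebra.
Set Implicit Arguments. Unset Strict Implicit. Unset Printing Implicit Defensive.
Import Order.TTheory GRing.Theory Num.Theory.
Local Open Scope ring_scope.

Section GLS.
Variables (R : realFieldType) (n L : nat).
Variables (blk : 'I_n -> 'I_L) (A : 'I_n -> bool) (Y : 'cV[R]_n) (s0sq : R).

Definition Sigma : 'M[R]_n :=
  \matrix_(i, j) (((blk i == blk j) : nat)%:R + s0sq * ((i == j) : nat)%:R).

Definition Xdes : 'M[R]_(n, 2) :=
  \matrix_(i, j) (if j == ord0 then 1 else ((A i) : nat)%:R).

Definition gls_est : 'cV[R]_2 :=
  invmx (Xdes^T *m invmx Sigma *m Xdes) *m Xdes^T *m invmx Sigma *m Y.

Definition tau_hat : R := gls_est (lift ord0 ord0) ord0.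

Definition rho : R := (1 + s0sq)^-1.

Definition nla (l : 'I_L) (a : bool) : R :=
  #|[set i : 'I_n | (blk i == l) && (A i == a)]|%:R.
Definition nl (l : 'I_L) : R := nla l false + nla l true.

Definition Ybar (l : 'I_L) (a : bool) : R :=
  (\sum_(i < n | (blk i == l) && (A i == a)) Y i ord0) / nla l a.

Definition q (l : 'I_L) : R := (1 - rho + rho * nl l)^-1.

Definition C1 : R :=
  (\sum_(l < L) q l * nl l) *
  (\sum_(l < L) q l * nla l true * nla l false * (Ybar l true - Ybar l false)).
Definition C2 : R :=
  (\sum_(l < L) q l * nla l false) * (\sum_(l < L) q l * nla l true * Ybar l true)
  - (\sum_(l < L) q l * nla l true) * (\sum_(l < L) q l * nla l false * Ybar l false).
Definition D1 : R :=
  (\sum_(l < L) q l * nl l) * (\sum_(l < L) q l * nla l true * nla l false).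
Definition D2 : R :=
  (\sum_(l < L) q l * nla l true) * (\sum_(l < L) q l * nla l false).

Definition tau1_hat : R := C1 / D1.
Definition tau0_hat : R := C2 / D2.
Definition lambda : R := rho * D1 / (rho * D1 + (1 - rho) * D2).

End GLS.

(* With w_l = 1/(n_l + σ0²) = ρ q_l, the covariance Σ = K + σ0² I (K the block
   indicator matrix, whose square is K scaled blockwise by n_l) has the explicit inverse
   σ0^-2 (I - w_{block} K).  Hence every entry of X'Σ^-1 X and X'Σ^-1 Y is a sum of
   per-block terms, and Cramer's rule for the 2x2 normal equations gives
   τ̂ = (ρ C1 + (1-ρ) C2) / (ρ D1 + (1-ρ) D2), which is the stated convex combination. *)

From Pilot Require Import Defs.
From HB Require Import structures.
From mathcomp Require Import all_boot all_order all_algebra.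
From mathcomp Require Import ring.
Import Order.TTheory GRing.Theory Num.Theory.
Local Open Scope ring_scope.
Set Implicit Arguments. Unset Strict Implicit. Unset Printing Implicit Defensive.

Local Notation i1 := (lift ord0 ord0 : 'I_2).

Lemma det_mx22 (R : comNzRingType) (M : 'M[R]_2) :
  \det M = M ord0 ord0 * M i1 i1 - M ord0 i1 * M i1 ord0.
Proof.
rewrite (expand_det_row _ ord0) !big_ord_recl big_ord0 /cofactor !det_mx11 !mxE /=.
have -> : lift ord0 (ord0 : 'I_1) = i1 by apply/val_inj.
have -> : lift i1 (ord0 : 'I_1) = ord0 by apply/val_inj.
by rewrite expr0 expr1; ring.
Qed.

Lemma cramer_mx22_row1 (F : fieldType) (M : 'M[F]_2) (v : 'cV[F]_2) :
  \det M != 0 ->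
  (invmx M *m v) i1 ord0 = (M ord0 ord0 * v i1 ord0 - M i1 ord0 * v ord0 ord0) / \det M.
Proof.
move=> detM; have Mu : M \in unitmx by rewrite unitmxE unitfE.
have /matrixP Mx : M *m (invmx M *m v) = v by rewrite mulKVmx.
have e0 := Mx ord0 ord0; have e1 := Mx i1 ord0.
rewrite !mxE !big_ord_recl !big_ord0 !addr0 in e0 e1.
by rewrite det_mx22 in detM *; rewrite -e0 -e1; field.
Qed.

Lemma trmx_mulmx_mxE (R : pzRingType) (n m p : nat)
    (X : 'M[R]_(n, m)) (S : 'M[R]_n) (Z : 'M[R]_(n, p)) a b :
  (X^T *m S *m Z) a b = \sum_i \sum_j X i a * S i j * Z j b.
Proof.
rewrite mxE exchange_big; apply: eq_bigr => j _; rewrite mxE mulr_suml.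
by apply: eq_bigr => i _; rewrite mxE.
Qed.

Lemma weighted_average (F : fieldType) (a b c1 d1 c2 d2 : F) :
  d1 != 0 -> d2 != 0 -> a * d1 + b * d2 != 0 ->
  (a * c1 + b * c2) / (a * d1 + b * d2) =
    a * d1 / (a * d1 + b * d2) * (c1 / d1)
    + (1 - a * d1 / (a * d1 + b * d2)) * (c2 / d2).
Proof. by move=> d1N0 d2N0 dN0; field; rewrite d1N0 d2N0 dN0. Qed.

Section BlockSums.
Variables (R : pzRingType) (n L : nat) (blk : 'I_n -> 'I_L).

Definition bsum (f : 'I_n -> R) (l : 'I_L) : R := \sum_(i | blk i == l) f i.
Definition bsize (l : 'I_L) : R := bsum (fun=> 1) l.

Lemma sum_bsum (f : 'I_n -> R) : \sum_i f i = \sum_l bsum f l.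
Proof. exact: partition_big. Qed.

Lemma sum_delta_mull (i : 'I_n) (f : 'I_n -> R) : \sum_k (i == k)%:R * f k = f i.
Proof.
rewrite (bigD1 i) //= eqxx mul1r big1 ?addr0 // => k /negbTE.
by rewrite eq_sym => ->; rewrite mul0r.
Qed.

Lemma sum_sameblock_mull (i : 'I_n) (f : 'I_n -> R) :
  \sum_k (blk i == blk k)%:R * f k = bsum f (blk i).
Proof.
rewrite /bsum [RHS]big_mkcond; apply: eq_bigr => k _; rewrite eq_sym.
by case: eqP; rewrite ?mul1r ?mul0r.
Qed.

Lemma bsum_delta (j : 'I_n) (l : 'I_L) : bsum (fun k => (k == j)%:R) l = (blk j == l)%:R.
Proof.
rewrite /bsum big_mkcond -(sum_delta_mull j (fun k => (blk k == l)%:R)).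
apply: eq_bigr => k _; rewrite [j == k]eq_sym.
by case: (k == j); case: (blk k == l); rewrite ?mul1r ?mul0r ?mulr0.
Qed.

Lemma bsum_const (c : R) (l : 'I_L) : bsum (fun=> c) l = bsize l * c.
Proof. by rewrite /bsize /bsum mulr_suml; apply: eq_bigr => k _; rewrite mul1r. Qed.

End BlockSums.

Arguments bsize {R n L} blk l.

Section SigmaInverse.
Variables (R : realFieldType) (n L : nat) (blk : 'I_n -> 'I_L) (s : R).
Hypothesis s_gt0 : 0 < s.

Local Notation bsum := (bsum blk).
Local Notation bsize := (@bsize R n L blk).

Definition block_weight (l : 'I_L) : R := (bsize l + s)^-1.

Lemma bsize_ge0 l : 0 <= bsize l.
Proof. exact: sumr_ge0. Qed.

Lemma bsize_addr_neq0 l : bsize l + s != 0.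
Proof. by rewrite gt_eqF // ltr_wpDl // bsize_ge0. Qed.

Definition Sigma_inv : 'M[R]_n := \matrix_(i, j)
  (s^-1 * ((i == j)%:R - block_weight (blk i) * (blk i == blk j)%:R)).

Lemma Sigma_mulmx_inv : Sigma blk s *m Sigma_inv = 1%:M.
Proof.
apply/matrixP => i j; rewrite !mxE.
under eq_bigr do rewrite !mxE mulrDl -mulrA.
rewrite big_split /= -mulr_sumr sum_delta_mull sum_sameblock_mull.
have -> : bsum (fun k => s^-1 * ((k == j)%:R - block_weight (blk k) * (blk k == blk j)%:R)) (blk i)
    = s^-1 * ((blk j == blk i)%:R - bsize (blk i) * (block_weight (blk i) * (blk i == blk j)%:R)).
  rewrite -bsum_delta -bsum_const /bsum -sumrB mulr_sumr.
  by apply: eq_bigr => k /eqP ->.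
have sN0 : s != 0 by rewrite gt_eqF.
have bN0 := bsize_addr_neq0 (blk i).
rewrite eq_sym /block_weight.
by case: eqP => _ /=; field; rewrite bN0 sN0.
Qed.

Lemma invmx_Sigma : invmx (Sigma blk s) = Sigma_inv.
Proof.
have [Su _] := mulmx1_unit Sigma_mulmx_inv.
by rewrite -[RHS]mul1mx -(mulVmx Su) -mulmxA Sigma_mulmx_inv mulmx1.
Qed.

Lemma Sigma_inv_form (f g : 'I_n -> R) :
  \sum_i \sum_j f i * Sigma_inv i j * g j =
  s^-1 * \sum_l (bsum (fun i => f i * g i) l - block_weight l * bsum f l * bsum g l).
Proof.
have row_sum i : \sum_j f i * Sigma_inv i j * g j =
    s^-1 * (f i * g i - block_weight (blk i) * f i * bsum g (blk i)).
  rewrite (eq_bigr (fun j => s^-1 * ((i == j)%:R * (f i * g j))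
      - s^-1 * block_weight (blk i) * f i * ((blk i == blk j)%:R * g j))); last first.
    by move=> j _; rewrite mxE; ring.
  by rewrite sumrB -!mulr_sumr sum_delta_mull sum_sameblock_mull; ring.
rewrite (eq_bigr _ (fun i _ => row_sum i)) -mulr_sumr (sum_bsum blk); congr (_ * _).
apply: eq_bigr => l _.
transitivity (bsum (fun i => f i * g i) l - bsum (fun i => block_weight l * f i * bsum g l) l).
  by rewrite /bsum -sumrB; apply: eq_bigr => i /eqP ->.
by rewrite [in X in _ - X]/bsum -mulr_suml -mulr_sumr.
Qed.

End SigmaInverse.

Section GLSEstimate.
Variables (R : realFieldType) (n L : nat) (blk : 'I_n -> 'I_L) (A : 'I_n -> bool).
Variables (Y : 'cV[R]_n) (s : R).
Hypothesis s_gt0 : 0 < s.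

Local Notation bsum := (bsum blk).
Local Notation nla := (nla R blk A).
Local Notation nl := (nl R blk A).
Local Notation q := (q blk A s).
Local Notation Ybar := (Ybar blk A Y).
Local Notation X := (Xdes R A).
Local Notation XSX := (X^T *m invmx (Sigma blk s) *m X).
Local Notation XSY := (X^T *m invmx (Sigma blk s) *m Y).

Definition group_sum (f : 'I_n -> R) (l : 'I_L) (a : bool) : R :=
  \sum_(i | (blk i == l) && (A i == a)) f i.

Lemma bsum_group_split f l : bsum f l = group_sum f l true + group_sum f l false.
Proof.
by rewrite /bsum (bigID A) /=; congr (_ + _); apply: eq_bigl => i;
  rewrite ?eqb_id ?eqbF_neg.
Qed.

Lemma bsum_treated h l : bsum (fun i => (A i)%:R * h i) l = group_sum h l true.
Proof.
rewrite bsum_group_split [X in _ + X]big1 ?addr0 => [|i /andP[_ /eqP ->]]; last first.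
  by rewrite mul0r.
by apply: eq_bigr => i /andP[_ /eqP ->]; rewrite mul1r.
Qed.

Lemma nlaE l a : nla l a = group_sum (fun=> 1) l a.
Proof.
by rewrite /group_sum /Defs.nla -sumr_const; apply: eq_bigl => i; rewrite inE.
Qed.

Lemma bsize_nl l : bsize blk l = nl l.
Proof. by rewrite /bsize bsum_group_split -!nlaE addrC. Qed.

Lemma nla_Ybar l a : nla l a * Ybar l a = group_sum (fun i => Y i ord0) l a.
Proof.
rewrite /Ybar; have [nla0|nla_neq0] := eqVneq (nla l a) 0; last first.
  by rewrite mulrCA mulfV // mulr1.
move: nla0; rewrite /Defs.nla => /eqP; rewrite pnatr_eq0 cards_eq0 => /eqP group0.
rewrite group0 cards0 mul0r /group_sum big1 // => i i_in.
have : i \in set0 by rewrite -group0 inE.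
by rewrite inE.
Qed.

Lemma Sigma_inv_mxE m k (B : 'M[R]_(n, m)) (C : 'M[R]_(n, k)) a b (f g h : 'I_n -> R) :
  (forall i, B i a = f i) -> (forall i, C i b = g i) -> (forall i, f i * g i = h i) ->
  (B^T *m invmx (Sigma blk s) *m C) a b =
  s^-1 * \sum_l (bsum h l - block_weight blk s l * bsum f l * bsum g l).
Proof.
move=> Bf Cg fgh; rewrite invmx_Sigma // trmx_mulmx_mxE.
under eq_bigr do under eq_bigr do rewrite Bf Cg.
rewrite Sigma_inv_form; congr (_ * _); apply: eq_bigr => l _.
by congr (_ - _); apply: eq_bigr => i _.
Qed.

Lemma nl_ge0 l : 0 <= nl l.
Proof. exact: addr_ge0. Qed.

Lemma rho_q l : rho s * q l = block_weight blk s l.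
Proof.
rewrite /block_weight bsize_nl /Defs.q /rho; move: (nl l) (nl_ge0 l) => m m_ge0.
have s1N0 : 1 + s != 0 by rewrite gt_eqF // ltr_wpDl.
have msN0 : m + s != 0 by rewrite gt_eqF // ltr_wpDl.
by field; rewrite msN0 s1N0.
Qed.

Lemma block_term l (x y z : R) :
  s^-1 * (x - block_weight blk s l * y * z) =
  rho s * q l * (x + s^-1 * (x * nl l - y * z)).
Proof.
rewrite rho_q /block_weight bsize_nl; move: (nl l) (nl_ge0 l) => m m_ge0.
have sN0 : s != 0 by rewrite gt_eqF.
have msN0 : m + s != 0 by rewrite gt_eqF // ltr_wpDl.
by field; rewrite msN0 sN0.
Qed.

Local Notation n1 l := (nla l true).
Local Notation n0 l := (nla l false).

(* The treatment column of [Xdes] is written [(A i)%:R * 1] so that [bsum_treated] applies. *)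
Lemma bsum_treatment l : bsum (fun i => (A i)%:R * 1) l = n1 l.
Proof. by rewrite bsum_treated nlaE. Qed.

Lemma bsum_Y l : bsum (fun i => Y i ord0) l = n1 l * Ybar l true + n0 l * Ybar l false.
Proof. by rewrite bsum_group_split !nla_Ybar. Qed.

Lemma bsum_treated_Y l : bsum (fun i => (A i)%:R * Y i ord0) l = n1 l * Ybar l true.
Proof. by rewrite bsum_treated nla_Ybar. Qed.

Lemma XSX_00 : XSX ord0 ord0 = rho s * \sum_l q l * nl l.
Proof.
rewrite (Sigma_inv_mxE (f := fun=> 1) (g := fun=> 1) (h := fun=> 1)) => [|i|i|i];
  rewrite ?mxE ?mulr1 // !mulr_sumr; apply: eq_bigr => l _.
by rewrite block_term bsum_const bsize_nl; ring.
Qed.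

Lemma XSX_01 : XSX ord0 i1 = rho s * \sum_l q l * n1 l.
Proof.
rewrite (Sigma_inv_mxE (f := fun=> 1) (g := fun i => (A i)%:R * 1) (h := fun i => (A i)%:R * 1))
  => [|i|i|i]; rewrite ?mxE ?mulr1 ?mul1r // !mulr_sumr; apply: eq_bigr => l _.
by rewrite block_term bsum_const bsize_nl bsum_treatment /Defs.nl; ring.
Qed.

Lemma XSX_10 : XSX i1 ord0 = rho s * \sum_l q l * n1 l.
Proof.
rewrite (Sigma_inv_mxE (f := fun i => (A i)%:R * 1) (g := fun=> 1) (h := fun i => (A i)%:R * 1))
  => [|i|i|i]; rewrite ?mxE ?mulr1 // !mulr_sumr; apply: eq_bigr => l _.
by rewrite block_term bsum_const bsize_nl bsum_treatment /Defs.nl; ring.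
Qed.

Lemma XSX_11 : XSX i1 i1 =
  rho s * (\sum_l q l * n1 l + s^-1 * \sum_l q l * n1 l * n0 l).
Proof.
rewrite (Sigma_inv_mxE (f := fun i => (A i)%:R * 1) (g := fun i => (A i)%:R * 1)
  (h := fun i => (A i)%:R * 1)) => [|i|i|i]; rewrite ?mxE ?mulr1 //; last first.
  by case: (A i); rewrite ?mulr1 ?mulr0.
rewrite !mulr_sumr -big_split !mulr_sumr; apply: eq_bigr => l _ /=.
by rewrite block_term bsum_treatment /Defs.nl; ring.
Qed.

Lemma XSY_0 : XSY ord0 ord0 =
  rho s * (\sum_l q l * n1 l * Ybar l true + \sum_l q l * n0 l * Ybar l false).
Proof.
rewrite (Sigma_inv_mxE (f := fun=> 1) (g := fun i => Y i ord0) (h := fun i => Y i ord0))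
  => [|i|i|i]; rewrite ?mxE ?mul1r // -big_split !mulr_sumr; apply: eq_bigr => l _ /=.
by rewrite block_term bsum_const bsize_nl bsum_Y /Defs.nl; ring.
Qed.

Lemma XSY_1 : XSY i1 ord0 = rho s * (\sum_l q l * n1 l * Ybar l true
  + s^-1 * \sum_l q l * n1 l * n0 l * (Ybar l true - Ybar l false)).
Proof.
rewrite (Sigma_inv_mxE (f := fun i => (A i)%:R * 1) (g := fun i => Y i ord0)
  (h := fun i => (A i)%:R * Y i ord0)) => [|i|i|i]; rewrite ?mxE ?mulr1 //.
rewrite !mulr_sumr -big_split !mulr_sumr; apply: eq_bigr => l _ /=.
by rewrite block_term bsum_treatment bsum_Y bsum_treated_Y /Defs.nl; ring.
Qed.

Lemma sum_q_nl : \sum_l q l * nl l = \sum_l q l * n0 l + \sum_l q l * n1 l.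
Proof. by rewrite -big_split; apply: eq_bigr => l _; rewrite mulrDr. Qed.

Lemma det_XSX : \det XSX = rho s ^+ 2 / s * (D1 blk A s + s * D2 blk A s).
Proof.
have sN0 : s != 0 by rewrite gt_eqF.
by rewrite det_mx22 XSX_00 XSX_01 XSX_10 XSX_11 /D1 /D2 sum_q_nl; field.
Qed.

Lemma cramer_numerator_XSX :
  XSX ord0 ord0 * XSY i1 ord0 - XSX i1 ord0 * XSY ord0 ord0 =
  rho s ^+ 2 / s * (C1 blk A Y s + s * C2 blk A Y s).
Proof.
have sN0 : s != 0 by rewrite gt_eqF.
by rewrite XSX_00 XSX_10 XSY_0 XSY_1 /C1 /C2 sum_q_nl; field.
Qed.

Lemma tau_hat_ratio : 0 < D1 blk A s -> 0 < D2 blk A s ->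
  tau_hat blk A Y s =
    (rho s * C1 blk A Y s + (1 - rho s) * C2 blk A Y s)
    / (rho s * D1 blk A s + (1 - rho s) * D2 blk A s).
Proof.
move=> D1_gt0 D2_gt0.
have sN0 : s != 0 by rewrite gt_eqF.
have s1N0 : 1 + s != 0 by rewrite gt_eqF // ltr_wpDl // ltW.
have DN0 : D1 blk A s + s * D2 blk A s != 0 by rewrite gt_eqF // addr_gt0 // mulr_gt0.
have detN0 : \det XSX != 0 by rewrite det_XSX !mulf_neq0 ?expf_neq0 ?invr_eq0.
have -> : tau_hat blk A Y s = (invmx XSX *m XSY) i1 ord0 by rewrite /tau_hat /gls_est !mulmxA.
rewrite cramer_mx22_row1 // cramer_numerator_XSX det_XSX /rho.
by field; rewrite s1N0 sN0 [1 + s]addrC addrK DN0.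
Qed.

End GLSEstimate.

Theorem mainTheorem3 (R : realFieldType) (n L : nat)
    (blk : 'I_n -> 'I_L) (A : 'I_n -> bool) (Y : 'cV[R]_n) (s0sq : R)
    (hs0 : 0 < s0sq)
    (hD1 : 0 < D1 blk A s0sq)
    (hD2 : 0 < D2 blk A s0sq) :
  tau_hat blk A Y s0sq =
    lambda blk A s0sq * tau1_hat blk A Y s0sq
    + (1 - lambda blk A s0sq) * tau0_hat blk A Y s0sq.
Proof.
have s1_gt1 : 1 < 1 + s0sq by rewrite ltrDl.
have rho_gt0 : 0 < rho s0sq by rewrite invr_gt0 (lt_trans ltr01).
have rho_lt1 : rho s0sq < 1 by rewrite invf_lt1 // (lt_trans ltr01).
rewrite tau_hat_ratio // weighted_average ?gt_eqF //.
by rewrite addr_gt0 // mulr_gt0 // subr_gt0.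
Qed.
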